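(* Let $G$ be a group, let $\mathcal{R}=\mathbb{C}^N$ with standard basis $e_0,\dots,e_{N-1}$ and $\mathcal{H}=\mathbb{C}^N$ with computational basis $|0\rangle,\dots,|N-1\rangle$. Let $V:G\to\mathcal{U}(\mathcal{R})$ and $W:G\to\mathcal{U}(\mathcal{H})$ be unitary representations. Define, for nonzero $x=\sum_i x_ie_i$, $T(x)=\frac{1}{\|x\|}\sum_i x_i|i\rangle$ and $\hat{T}(x)=\sum_i x_i|i\rangle$, and let $A:G\to\mathcal{U}(\mathcal{H})$ be a representation induced by $\hat{T}$, i.e. $\hat{T}\circ V(g)=A(g)\circ\hat{T}$ for all $g\in G$. Let $U_{inv}$ and $U_\theta$ be unitaries on $\mathcal{H}$, let $\mathcal{O}$ be an observable on $\mathcal{H}$, and set $$h_\theta(x)=\operatorname{tr}\!\left[U_{inv}U_\theta T(x)\,(U_{inv}U_\theta T(x))^\dagger\,\mathcal{O}\right].$$ If $U_{inv}$ and $\mathcal{O}$ commute with $W(g)$ for all $g\in G$, and $U_\theta$ is an intertwining map from $A$ to $W$, i.e. $U_\theta A(g)=W(g)U_\theta$ for all $g\in G$, then $h_\theta(V(g)x)=h_\theta(x)$ for all $g\in G$ and all nonzero $x\in\mathcal{R}$.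
   Context: $\mathcal{U}(\cdot)$ denotes the group of unitary operators; a unitary representation is a homomorphism into it. $T(x)$ is viewed as a column vector so $T(x)T(x)^\dagger$ is the corresponding density matrix. *)

From HB Require Import structures.
From mathcomp Require Import all_boot all_order all_algebra.
From mathcomp Require Import sesquilinear spectral.
Set Implicit Arguments. Unset Strict Implicit. Unset Printing Implicit Defensive.
Import Order.TTheory GRing.Theory Num.Theory.
Local Open Scope ring_scope.
Local Open Scope sesquilinear_scope.

Definition unitary_rep (G : groupType) (C : numClosedFieldType) (N : nat)
    (rho : G -> 'M[C]_N) : Prop :=
  [/\ forall g, rho g \is unitarymx,
      rho 1%g = 1%:M
    & forall g h, rho (g * h)%g = rho g *m rho h].

Definition vnorm (C : numClosedFieldType) (N : nat) (x : 'cV[C]_N) : C :=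
  sqrtC (\sum_(i < N) `|x i 0| ^+ 2).

(* hat T(x) = sum_i x_i |i>  (coordinates copied to the computational basis) *)
Definition That (C : numClosedFieldType) (N : nat) (x : 'cV[C]_N) : 'cV[C]_N :=
  \col_(i < N) x i 0.

Definition Tenc (C : numClosedFieldType) (N : nat) (x : 'cV[C]_N) : 'cV[C]_N :=
  (vnorm x)^-1 *: That x.

Definition htheta (C : numClosedFieldType) (N : nat)
    (Uinv Utheta O : 'M[C]_N) (x : 'cV[C]_N) : C :=
  let psi := Uinv *m Utheta *m Tenc x in
  \tr (psi *m psi ^t* *m O).

From HB Require Import structures.
From mathcomp Require Import all_boot all_order all_algebra.
From mathcomp Require Import sesquilinear spectral.
Set Implicit Arguments. Unset Strict Implicit. Unset Printing Implicit Defensive.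
Import Order.TTheory GRing.Theory Num.Theory.
Local Open Scope ring_scope.
Local Open Scope sesquilinear_scope.

(* Since [T] is [U]-equivariant for every unitary [U] (norms are preserved and
   [hat T] is the identity on coordinates), [T (V g x) = V g (T x) = A g (T x)].
   The intertwining and commutation hypotheses move [A g] through [Uinv Utheta]
   as [W g], and the resulting conjugation of the density matrix by the unitary
   [W g] is invisible to [tr (_ O)] because [O] commutes with [W g]. *)

Section Encoding.
Variables (C : numClosedFieldType) (n : nat).

Lemma ThatE (x : 'cV[C]_n) : That x = x.
Proof. by apply/matrixP => i j; rewrite mxE (ord1 j). Qed.

Lemma trmxC_mul_unitary (U : 'M[C]_n) : U \is unitarymx -> U^t* *m U = 1%:M.
Proof. by move=> Uu; rewrite -[LHS]mul1mx mulmxA mulmxKtV. Qed.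

Lemma vnormE (x : 'cV[C]_n) : vnorm x = sqrtC ((x^t* *m x) 0 0).
Proof.
rewrite /vnorm mxE; congr sqrtC; apply: eq_bigr => i _.
by rewrite !mxE normCK mulrC.
Qed.

Lemma vnorm_unitarymx (U : 'M[C]_n) (x : 'cV[C]_n) :
  U \is unitarymx -> vnorm (U *m x) = vnorm x.
Proof.
move=> Uu; rewrite !vnormE trmx_mul map_mxM mulmxA -(mulmxA _ _ U).
by rewrite trmxC_mul_unitary // mulmx1.
Qed.

Lemma Tenc_unitarymx (U : 'M[C]_n) (x : 'cV[C]_n) :
  U \is unitarymx -> Tenc (U *m x) = U *m Tenc x.
Proof. by move=> Uu; rewrite /Tenc vnorm_unitarymx // !ThatE scalemxAr. Qed.

End Encoding.

Lemma mxtrace_density_unitary (C : numClosedFieldType) n m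
    (U O : 'M[C]_n) (psi : 'M[C]_(n, m)) :
  U \is unitarymx -> O *m U = U *m O ->
  \tr (U *m psi *m (U *m psi)^t* *m O) = \tr (psi *m psi^t* *m O).
Proof.
move=> Uu OU; have UOU : U^t* *m O *m U = O.
  by rewrite -mulmxA OU mulmxA trmxC_mul_unitary // mul1mx.
have -> : U *m psi *m (U *m psi)^t* *m O =
    U *m (psi *m psi^t* *m (U^t* *m O)) by rewrite trmx_mul map_mxM !mulmxA.
by rewrite mxtrace_mulC -(mulmxA (psi *m psi^t*)) UOU.
Qed.

Theorem proposition2 (G : groupType) (C : numClosedFieldType) (N : nat)
    (V W A : G -> 'M[C]_N) (Uinv Utheta O : 'M[C]_N) :
  unitary_rep V -> unitary_rep W -> unitary_rep A ->
  (forall g x, That (V g *m x) = A g *m That x) ->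
  Uinv \is unitarymx -> Utheta \is unitarymx ->
  O \is hermsymmx ->
  (forall g, Uinv *m W g = W g *m Uinv) ->
  (forall g, O *m W g = W g *m O) ->
  (forall g, Utheta *m A g = W g *m Utheta) ->
  forall g (x : 'cV[C]_N), x != 0 ->
    htheta Uinv Utheta O (V g *m x) = htheta Uinv Utheta O x.
Proof.
move=> [Vu _ _] [Wu _ _] _ TVA _ _ _ UinvW OW UthetaA g x _.
have VA (y : 'cV_N) : V g *m y = A g *m y by have := TVA g y; rewrite !ThatE.
have psiW : Uinv *m Utheta *m Tenc (V g *m x) =
    W g *m (Uinv *m Utheta *m Tenc x).
  by rewrite Tenc_unitarymx // VA !mulmxA -(mulmxA Uinv) UthetaA mulmxA UinvW.
by rewrite /htheta psiW mxtrace_density_unitary.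
Qed.
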